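(* Let $\sigma$ be a super filling of $\mathrm{dg}(\lambda)$ (order $<_2$) and let $j$ be such that $\lambda_j=\lambda_{j+1}$. Then $\mathrm{maj}(\tau_j(\sigma))=\mathrm{maj}(\sigma)$.
   Context: Let $\lambda=(\lambda_1\ge\dots\ge\lambda_k>0)$ be a partition; $\mathrm{dg}(\lambda)=\{(r,i):1\le i\le k,1\le r\le\lambda_i\}$, $(r,i)$ being row $r$ from the bottom and column $i$ from the left (columns bottom-justified of heights $\lambda_i$); $\mathrm{leg}((r,i))=\lambda_i-r$. $\mathcal A=\{1,\bar1,2,\bar2,\dots\}$ consists of positive letters $i$ and negative letters $\bar i$, totally ordered by $<_2$: $0<1<2<3<\cdots<\bar3<\bar2<\bar1$. $I(a,b)=1$ if $a>b$ or $a=b$ is negative, and $I(a,b)=0$ if $a<b$ or $a=b$ is positive. A super filling is $\sigma:\mathrm{dg}(\lambda)\to\mathcal A$; a cell $u=(r,i)$, $r>1$, is a descent if $I(\sigma(u),\sigma((r-1,i)))=1$, and $\mathrm{maj}(\sigma)=\sum_{\text{descents }u}(\mathrm{leg}(u)+1)$. For letters $(a,b,c)$ (with $a$ possibly $0$) say $(a,b,c)$ is quinv if exactly one of $I(a,b)=1$, $I(c,b)=0$, $I(a,c)=0$ holds. The operator $\tau_j$ (for $\lambda_j=\lambda_{j+1}=k'$): write $a_r=\sigma((r,j))$, $b_r=\sigma((r,j+1))$. Let $r_{\max}$ be the largest $r\in\{2,\dots,k'\}$ such that $(a_r,a_{r-1},b_{r-1})$ and $(b_r,a_{r-1},b_{r-1})$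 are either both quinv or both not quinv; if no such $r$ exists, $r_{\max}=1$. Then $\tau_j(\sigma)$ is obtained from $\sigma$ by exchanging the entries of cells $(i,j)$ and $(i,j+1)$ for every $i$ with $r_{\max}\le i\le k'$, all other entries unchanged. *)

From mathcomp Require Import all_boot.
Set Implicit Arguments. Unset Strict Implicit. Unset Printing Implicit Defensive.

(* Letters of the super alphabet: [Pos i] is the positive letter i,
   [Neg i] the negative letter \bar i (valid letters have i >= 1). *)
Inductive letter := Pos of nat | Neg of nat.

Definition valid_letter (a : letter) : bool :=
  match a with Pos i => 0 < i | Neg i => 0 < i end.

Definition lt2 (a b : letter) : bool :=
  match a, b with
  | Pos i, Pos j => i < j
  | Pos _, Neg _ => true
  | Neg _, Pos _ => false
  | Neg i, Neg j => j < i
  end.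

Definition Ind (a b : letter) : bool :=
  match a, b with
  | Neg i, Neg j => (i == j) || lt2 b a
  | _, _ => lt2 b a
  end.

Definition quinv (a b c : letter) : bool :=
  (Ind a b + ~~ Ind c b + ~~ Ind a c == 1)%N.

Definition is_partition (lam : seq nat) : bool :=
  sorted geq lam && all (fun x => 0 < x) lam.

(* lambda_i, 1-indexed *)
Definition part (lam : seq nat) (i : nat) : nat := nth 0 lam i.-1.

(* A filling is a function (r, i) |-> letter; only values on the diagram
   dg(lam) = {(r,i) : 1 <= i <= k, 1 <= r <= lambda_i} matter. *)
Definition filling := nat -> nat -> letter.

Definition super_filling (lam : seq nat) (sigma : filling) : Prop :=
  forall i r, 1 <= i <= size lam -> 1 <= r <= part lam i -> valid_letter (sigma r i).

(* maj(sigma) = sum over descents u = (r,i), r > 1, of leg(u) + 1 = lambda_i - r + 1 *)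
Definition maj (lam : seq nat) (sigma : filling) : nat :=
  \sum_(1 <= i < (size lam).+1)
    \sum_(2 <= r < (part lam i).+1)
      (if Ind (sigma r i) (sigma r.-1 i) then part lam i - r + 1 else 0).

Definition rmax (lam : seq nat) (j : nat) (sigma : filling) : nat :=
  let k' := part lam j in
  maxn 1 (\max_(2 <= r < k'.+1 |
            quinv (sigma r j) (sigma r.-1 j) (sigma r.-1 j.+1)
            == quinv (sigma r j.+1) (sigma r.-1 j) (sigma r.-1 j.+1)) r).

Definition tau (lam : seq nat) (j : nat) (sigma : filling) : filling :=
  let k' := part lam j in
  let m := rmax lam j sigma in
  fun r i =>
    if (m <= r <= k') && (i == j) then sigma r j.+1
    else if (m <= r <= k') && (i == j.+1) then sigma r j
    else sigma r i.

From mathcomp Require Import all_boot zify.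
Set Implicit Arguments. Unset Strict Implicit. Unset Printing Implicit Defensive.

(* Only the two equal-height columns j and j+1 are touched by tau_j, so it
   suffices to compare, row by row, the descent contributions of these two
   columns; both have the same leg weight lambda_j - r + 1 at row r.
   - Rows r < r_max are unchanged.
   - For rows r > r_max both cells of rows r and r-1 are exchanged, so the two
     descent indicators are merely permuted.
   - At the row r = r_max the exchange is "cut": row r is swapped but row r-1
     is not.  The defining property of r_max (both triples quinv or both not)
     is exactly what makes the number of descents in this row unchanged; this
     is the letter-level identity [quinv_balance], a finite case check on the
     relative <_2-order of four letters. *)

Lemma quinv_balance (a b c d : letter) :
  quinv a c d = quinv b c d ->
  (Ind a c + Ind b d = Ind b c + Ind a d)%N.
Proof.
by case: a => a; case: b => b; case: c => c; case: d => d;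
  rewrite /quinv /Ind /lt2; lia.
Qed.

Lemma bigmax_nat_cond (P : pred nat) (s : seq nat) :
  0 < \max_(r <- s | P r) r -> P (\max_(r <- s | P r) r).
Proof.
elim: s => [|x s IH]; first by rewrite big_nil.
rewrite big_cons; case Px: (P x) => //.
rewrite /maxn; case: ifP => // _ pos_max; apply: IH; lia.
Qed.

Lemma rmax_quinv (lam : seq nat) (j : nat) (sigma : filling) (m : nat) :
  rmax lam j sigma = m -> 1 < m ->
  quinv (sigma m j) (sigma m.-1 j) (sigma m.-1 j.+1)
  = quinv (sigma m j.+1) (sigma m.-1 j) (sigma m.-1 j.+1).
Proof.
rewrite /rmax; set X := \max_(_ <= r < _ | _) r => <- m_gt1.
have m_eq : maxn 1 X = X by apply/maxn_idPr; move: m_gt1; rewrite leq_max; lia.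
move: m_gt1; rewrite m_eq /X => X_pos.
by have /eqP := bigmax_nat_cond (ltnW X_pos).
Qed.

Lemma sum_split_pair (F : nat -> nat) (j n : nat) :
  1 <= j -> j < n ->
  \sum_(1 <= i < n.+1) F i
  = \sum_(1 <= i < j) F i + (F j + F j.+1) + \sum_(j.+2 <= i < n.+1) F i.
Proof.
move=> j_ge1 j_lt_n.
rewrite (big_cat_nat _ (n := j)) //; last by lia.
rewrite (big_cat_nat _ (m := j) (n := j.+2)) //; last by lia.
by rewrite big_nat_recr //= big_nat1 addnA.
Qed.

Section PartialColumnSwap.

Variables (sigma : filling) (j m K : nat).

Definition swap_rows : filling := fun r i =>
  if (m <= r <= K) && (i == j) then sigma r j.+1
  else if (m <= r <= K) && (i == j.+1) then sigma r j
  else sigma r i.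

Lemma swap_rows_other (r i : nat) :
  i != j -> i != j.+1 -> swap_rows r i = sigma r i.
Proof. by rewrite /swap_rows => /negbTE-> /negbTE->; rewrite !andbF. Qed.

Lemma swap_rows_descents (r : nat) :
  2 <= r <= K ->
  (m = r -> quinv (sigma r j) (sigma r.-1 j) (sigma r.-1 j.+1)
            = quinv (sigma r j.+1) (sigma r.-1 j) (sigma r.-1 j.+1)) ->
  (Ind (swap_rows r j) (swap_rows r.-1 j)
   + Ind (swap_rows r j.+1) (swap_rows r.-1 j.+1)
   = Ind (sigma r j) (sigma r.-1 j) + Ind (sigma r j.+1) (sigma r.-1 j.+1))%N.
Proof.
move=> /andP[r_ge2 r_leK] cut_quinv.
have j_neq : (j.+1 == j) = false by elim: j.
have r1_leK : r.-1 <= K by lia.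
rewrite /swap_rows !eqxx j_neq eq_sym j_neq r_leK r1_leK !andbT !andbF /=.
case: (ltngtP m r) => [m_lt_r | r_lt_m | m_eq_r].
- have -> : (m <= r.-1) = true by lia.
  by rewrite addnC.
- by have -> : (m <= r.-1) = false by lia.
- have -> : (m <= r.-1) = false by lia.
  by rewrite (quinv_balance (cut_quinv m_eq_r)) addnC.
Qed.

End PartialColumnSwap.

Theorem mainTheorem13 (lam : seq nat) (sigma : filling) (j : nat) :
  is_partition lam -> super_filling lam sigma ->
  1 <= j -> j < size lam -> part lam j = part lam j.+1 ->
  maj lam (tau lam j sigma) = maj lam sigma.
Proof.
move=> _ _ j_ge1 j_lt_size equal_heights.
have tau_swap : tau lam j sigma
  = swap_rows sigma j (rmax lam j sigma) (part lam j) by [].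
have other_cols i : i != j -> i != j.+1 ->
    forall r, tau lam j sigma r i = sigma r i.
  by move=> ij ij1 r; rewrite tau_swap swap_rows_other.
rewrite /maj !(sum_split_pair _ j_ge1 j_lt_size); congr (_ + _ + _).
- apply: eq_big_nat => i i_lt_j; apply: eq_bigr => r _.
  by rewrite !other_cols //; apply/eqP; lia.
- rewrite -equal_heights -!big_split /=; apply: eq_big_nat => r r_row.
  have r_bounds : 2 <= r <= part lam j by lia.
  rewrite -!mulnbl -!mulnDl tau_swap swap_rows_descents // => m_eq_r.
  by apply: (rmax_quinv m_eq_r); lia.
- apply: eq_big_nat => i i_gt_j1; apply: eq_bigr => r _.
  by rewrite !other_cols //; apply/eqP; lia.
Qed.
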